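(* Let $\Psi=(\psi_k)_{k\in\mathbb N}$ with $\psi_k\in(-\pi/2,\pi/2)$, let $F_n=i\tan(\psi_{|n|})$ for $n\in\mathbb Z$, let $d\ge1$, and let $G_d(z)=\begin{pmatrix}a(z)&b(z)\\-b^*(z)&a^*(z)\end{pmatrix}$ be the $SU(2)$ nonlinear Fourier series of the sequence $(F_n\mathbf 1_{\{-d\le n\le d\}})_{n\in\mathbb Z}$. For $x\in[0,1]$ let $\theta\in[0,\pi/2]$ be the unique number with $\cos\theta=x$ and set $z=e^{2i\theta}$. Then $$i\,\operatorname{Im}(u_d(\Psi,x))=b(z).$$
   Context: For a function $a$ on a subset of the Riemann sphere, $a^*(z)=\overline{a(\overline{z}^{-1})}$. $W(x)=\begin{pmatrix}x& i\sqrt{1-x^2}\\ i\sqrt{1-x^2}& x\end{pmatrix}$, $Z=\begin{pmatrix}1&0\\0&-1\end{pmatrix}$; $U_0(\Psi,x)=e^{i\psi_0Z}$, $U_d(\Psi,x)=e^{i\psi_dZ}W(x)U_{d-1}(\Psi,x)W(x)e^{i\psi_dZ}$ for $d\ge1$; $u_d(\Psi,x)$ is the upper left entry of $U_d(\Psi,x)$. For a finitely supported sequence $F:\mathbb Z\to\mathbb C$ its $SU(2)$ nonlinear Fourier series is $G(z)=\prod_k(1+|F_k|^2)^{-1/2}\begin{pmatrix}1&F_kz^k\\-\overline{F_k}z^{-k}&1\end{pmatrix}$, product ordered with $k$ increasing from left to right; it has the form $\begin{pmatrix}a&b\\-b^*&a^*\end{pmatrix}$. *)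

From mathcomp Require Import all_boot all_order all_algebra.
From mathcomp Require Import complex.
From mathcomp Require Import all_classical all_reals all_analysis.
Set Implicit Arguments. Unset Strict Implicit. Unset Printing Implicit Defensive.
Import Order.TTheory GRing.Theory Num.Theory.
Local Open Scope ring_scope.
Local Open Scope complex_scope.

Section QSP.
Variable R : realType.
Local Notation C := R[i].

Definition expiC (t : R) : C := cos t +i* sin t.

Definition expZ (psi : R) : 'M[C]_2 :=
  \matrix_(i < 2, j < 2)
    if i == j then (if i == 0 then expiC psi else expiC (- psi)) else 0.

Definition Wmat (x : R) : 'M[C]_2 :=
  \matrix_(i < 2, j < 2)
    if i == j then x%:C else 'i * (Num.sqrt (1 - x ^+ 2))%:C.

Fixpoint Umat (psi : nat -> R) (d : nat) (x : R) : 'M[C]_2 :=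
  match d with
  | 0 => expZ (psi 0%N)
  | d'.+1 => expZ (psi d) *m Wmat x *m Umat psi d' x *m Wmat x *m expZ (psi d)
  end.

Definition u_qsp (psi : nat -> R) (d : nat) (x : R) : C := Umat psi d x 0 0.

Definition nrm2 (c : C) : R := complex.Re c ^+ 2 + complex.Im c ^+ 2.

Definition nlf_factor (F : int -> C) (k : int) (z : C) : 'M[C]_2 :=
  ((Num.sqrt (1 + nrm2 (F k)))^-1)%:C *:
  \matrix_(i < 2, j < 2)
    if i == j then 1
    else if i == 0 then F k * z ^ k else - (F k)^* * z ^ (- k).

(* SU(2) nonlinear Fourier series of a sequence F supported in
   {lo, ..., lo + n - 1}: the ordered product of the factors with k
   increasing from left to right (factors outside the support are 1). *)
Definition nlfs (F : int -> C) (lo : int) (n : nat) (z : C) : 'M[C]_2 :=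
  \prod_(j < n) nlf_factor F (lo + j%:Z) z.

End QSP.

(* Conjugating by the Hadamard matrix H = [[1,1],[1,-1]] (H^-1 = H/2) turns
   e^{i psi Z} into [[cos psi, i sin psi], [i sin psi, cos psi]] and W(cos theta)
   into D_1, where D_k = diag(w^k, w^-k) and w = e^{i theta}.  For F_k = i tan psi_|k|
   the k-th normalized factor of the nonlinear Fourier series at z = w^2 is
   D_k [[cos psi_|k|, i sin psi_|k|], [i sin psi_|k|, cos psi_|k|]] D_-k, so the
   diagonal factors of the ordered product telescope to D_1 and
   H U_d H^-1 = D_d G_d D_d.  The (0,1) entry of the right side is b(z); that of
   the left side is (u_d - conj u_d)/2 = i Im u_d, because U_d is symmetric and of
   the form [[a, b], [-conj b, conj a]]. *)

From mathcomp Require Import all_boot all_order all_algebra.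
From mathcomp Require Import complex.
From mathcomp Require Import all_classical all_reals all_analysis.
From mathcomp Require Import ring lra zify.
Import Order.TTheory GRing.Theory Num.Theory.
Local Open Scope ring_scope.
Local Open Scope complex_scope.

Lemma mulmx2E (K : pzSemiRingType) (A B : 'M[K]_2) i j :
  (A *m B) i j = A i 0 * B 0 j + A i 1 * B 1 j.
Proof.
rewrite mxE !big_ord_recl big_ord0 addr0.
by have -> : lift ord0 ord0 = 1 :> 'I_2 by apply: val_inj.
Qed.

Ltac mx2_entrywise :=
  apply/matrixP => -[[|[|//]] ?] [[|[|//]] ?]; rewrite !(mulmx2E, mxE) /=.

Ltac complex_ext := apply/eqP; rewrite eq_complex /=; apply/andP; split; apply/eqP.

Section TwistedProducts.
Context {K : fieldType} (w : K).
Hypothesis w_neq0 : w != 0.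

Definition diagz (k : int) : 'M[K]_2 :=
  \matrix_(i < 2, j < 2) if i == j then (if i == 0 then w ^ k else w ^ (- k)) else 0.

Lemma diagz0 : diagz 0 = 1.
Proof. by mx2_entrywise; rewrite ?oppr0 ?expr0z. Qed.

Lemma diagzD a b : diagz a * diagz b = diagz (a + b).
Proof.
rewrite -mulmxE; mx2_entrywise; rewrite ?mulr0 ?mul0r ?addr0 ?add0r //.
  by rewrite expfzDr.
by rewrite -expfzDr // opprD.
Qed.

Lemma diagzDr a b X : diagz a * (diagz b * X) = diagz (a + b) * X.
Proof. by rewrite mulrA diagzD. Qed.

Lemma diagz_sandwich01 k (A : 'M[K]_2) : (diagz k * A * diagz k) 0 1 = A 0 1.
Proof.
rewrite -!mulmxE !mulmx2E !mxE /= mulr0 !mul0r !addr0 add0r mulrAC -expfzDr //.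
by rewrite subrr expr0z mul1r.
Qed.

Definition sym2 (c s : K) : 'M[K]_2 := \matrix_(i < 2, j < 2) if i == j then c else s.

Definition twist (c s : nat -> K) (k : int) : 'M[K]_2 :=
  \matrix_(i < 2, j < 2)
    if i == j then c `|k|%N
    else if i == 0 then s `|k|%N * (w * w) ^ k else s `|k|%N * (w * w) ^ (- k).

Lemma twistE c s k : twist c s k = diagz k * sym2 (c `|k|%N) (s `|k|%N) * diagz (- k).
Proof.
have wk_neq0 : w ^ k != 0 by rewrite expfz_neq0.
rewrite -!mulmxE; mx2_entrywise; rewrite ?opprK -?invr_expz ?expfzMl; field=> //.
Qed.

Definition twist_prod (c s : nat -> K) (n : nat) : 'M[K]_2 :=
  \prod_(j < (2 * n).+1) twist c s (- n%:Z + j%:Z).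

Lemma twist_prod0 c s : twist_prod c s 0 = sym2 (c 0%N) (s 0%N).
Proof. by rewrite /twist_prod big_ord1 twistE diagz0 mul1r mulr1. Qed.

Lemma twist_prodS c s n :
  twist_prod c s n.+1 = twist c s (- n.+1%:Z) * twist_prod c s n * twist c s n.+1.
Proof.
rewrite /twist_prod mulnS big_ord_recl big_ord_recr /= addr0 -mulrA.
congr (_ * (_ * twist _ _ _)); last by rewrite /bump /= PoszD; lia.
by apply: eq_bigr => j _; congr (twist _ _ _); rewrite /bump /= PoszD; lia.
Qed.

Lemma twist_prodS_sandwich c s n :
  diagz n.+1 * twist_prod c s n.+1 * diagz n.+1 =
  sym2 (c n.+1) (s n.+1) * diagz 1 * (diagz n * twist_prod c s n * diagz n) *
  diagz 1 * sym2 (c n.+1) (s n.+1).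
Proof.
rewrite twist_prodS !twistE abszN -!mulrA !diagzDr diagzD subrr addNr diagz0 mul1r mulr1.
by rewrite opprK -intS [_ + 1]addrC -intS.
Qed.

End TwistedProducts.

Section HadamardConjugation.
Context {R : realType}.
Local Notation C := R[i].

Lemma expiCD (a b : R) : expiC (a + b) = expiC a * expiC b.
Proof. by rewrite /expiC cosD sinD; complex_ext; ring. Qed.

Lemma expiC_mulN (t : R) : expiC t * expiC (- t) = 1.
Proof. by rewrite -expiCD subrr /expiC cos0 sin0. Qed.

Lemma expiC_neq0 (t : R) : expiC t != 0.
Proof.
by apply/eqP => e; have /eqP := expiC_mulN t; rewrite e mul0r eq_sym oner_eq0.
Qed.

Lemma expiCN (t : R) : expiC (- t) = (expiC t)^-1.
Proof. by rewrite -[RHS]mulr1 -(expiC_mulN t) mulKf ?expiC_neq0. Qed.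

Definition hadamard : 'M[C]_2 :=
  \matrix_(i < 2, j < 2) if (i == 1) && (j == 1) then -1 else 1.

Definition hconj (A : 'M[C]_2) : 'M[C]_2 := 2^-1 *: (hadamard * A * hadamard).

Lemma two_neq0 : 2 != 0 :> C.
Proof. by rewrite pnatr_eq0. Qed.

Lemma hadamard_sqr : hadamard * hadamard = 2 *: 1.
Proof. by rewrite -mulmxE; mx2_entrywise; ring. Qed.

Lemma hconjM A B : hconj (A * B) = hconj A * hconj B.
Proof.
rewrite /hconj -scalerAl -scalerAr scalerA !mulrA -[_ * hadamard * hadamard]mulrA.
by rewrite hadamard_sqr mulr_algr !scalerAl scalerA mulfVK ?two_neq0.
Qed.

Lemma hconj01 A : hconj A 0 1 = (A 0 0 - A 0 1 + A 1 0 - A 1 1) / 2.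
Proof. by rewrite /hconj -!mulmxE !(mulmx2E, mxE) /=; ring. Qed.

Lemma hconj_expZ p : hconj (expZ p) = sym2 (cos p)%:C ('i * (sin p)%:C).
Proof.
rewrite /hconj -!mulmxE; mx2_entrywise; rewrite /expiC cosN sinN.
all: by complex_ext; field=> //.
Qed.

Lemma hconj_Wmat_cos (t : R) : 0 <= sin t -> hconj (Wmat (cos t)) = diagz (expiC t) 1.
Proof.
move=> sin_ge0; rewrite /hconj /Wmat -!mulmxE.
have -> : Num.sqrt (1 - cos t ^+ 2) = sin t by rewrite -sin2cos2 sqrtr_sqr ger0_norm.
mx2_entrywise; rewrite ?exprN1 -?expiCN /expiC ?cosN ?sinN.
all: by complex_ext; field=> //.
Qed.

End HadamardConjugation.

Section QSPMatrices.
Context {R : realType}.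
Local Notation C := R[i].
Local Notation cosC psi := (fun k : nat => (cos (psi k))%:C).
Local Notation isinC psi := (fun k : nat => 'i * (sin (psi k))%:C).

Definition su2_shaped (A : 'M[C]_2) := A 1 1 = conjc (A 0 0) /\ A 1 0 = - conjc (A 0 1).

Lemma su2_shapedM A B : su2_shaped A -> su2_shaped B -> su2_shaped (A *m B).
Proof.
move=> [A11 A10] [B11 B10]; rewrite /su2_shaped !mulmx2E A11 A10 B11 B10.
by rewrite !(rmorphD, rmorphM, rmorphN) /= !conjcK; split; ring.
Qed.

Lemma su2_shaped_expZ (p : R) : su2_shaped (expZ p).
Proof. by rewrite /su2_shaped !mxE /= /expiC cosN sinN; split=> //; complex_ext; ring. Qed.

Lemma su2_shaped_Wmat (x : R) : su2_shaped (Wmat x).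
Proof. by rewrite /su2_shaped !mxE /=; split; complex_ext; ring. Qed.

Lemma su2_shaped_Umat psi n (x : R) : su2_shaped (Umat psi n x).
Proof.
elim: n => [|n IH] /=; first exact: su2_shaped_expZ.
have [hE hW] := (su2_shaped_expZ (psi n.+1), su2_shaped_Wmat x).
by do 4![apply: su2_shapedM => //].
Qed.

Lemma Umat_tr psi n (x : R) : (Umat psi n x)^T = Umat psi n x.
Proof.
have expZ_tr p : (expZ p)^T = expZ p by mx2_entrywise.
have Wmat_tr : (Wmat x)^T = Wmat x by mx2_entrywise.
elim: n => [|n IH] /=; first exact: expZ_tr.
by rewrite !trmx_mul expZ_tr Wmat_tr IH !mulmxA.
Qed.

Lemma hconj_Umat01 psi n (x : R) :
  hconj (Umat psi n x) 0 1 = 'i * (complex.Im (u_qsp psi n x))%:C.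
Proof.
have [U11 _] := su2_shaped_Umat psi n x.
have U10 : Umat psi n x 1 0 = Umat psi n x 0 1 by rewrite -[in LHS]Umat_tr mxE.
by rewrite hconj01 U10 U11 addrNK subcJ mulrAC [2 * _]mulrC mulfK ?two_neq0 // mulrC.
Qed.

Lemma hconj_Umat psi n (t : R) : 0 <= sin t ->
  hconj (Umat psi n (cos t)) =
  diagz (expiC t) n * twist_prod (expiC t) (cosC psi) (isinC psi) n * diagz (expiC t) n.
Proof.
move=> sin_ge0; elim: n => [|n IH].
  by rewrite /= hconj_expZ twist_prod0 ?expiC_neq0 // (diagz0 (expiC t)) mul1r mulr1.
rewrite twist_prodS_sandwich ?expiC_neq0 // -IH /= !mulmxE !hconjM.
by rewrite hconj_expZ hconj_Wmat_cos.
Qed.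

Lemma nlf_factor_itan (F : int -> C) psi (w : C) (k : int) :
  - (pi / 2) < psi `|k|%N < pi / 2 -> F k = 'i * (tan (psi `|k|%N))%:C ->
  nlf_factor F k (w * w) = twist w (cosC psi) (isinC psi) k.
Proof.
rewrite /nlf_factor /twist => + ->; move: (psi `|k|%N) => p /cos_gt0_pihalf cos_gt0.
have cos_neq0 : cos p != 0 by rewrite gt_eqF.
have norm_sec : Num.sqrt (1 + nrm2 ('i * (tan p)%:C)) = (cos p)^-1.
  have -> : 1 + nrm2 ('i * (tan p)%:C) = (cos p ^+ 2 + sin p ^+ 2) / cos p ^+ 2.
    by rewrite /nrm2 /tan /= !(mul0r, mul1r, mulr0, subr0, add0r) oppr0 expr0n add0r; field.
  by rewrite cos2Dsin2 div1r -exprVn sqrtr_sqr ger0_norm // invr_ge0 ltW.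
have itan_cos : (cos p)%:C * ('i * (tan p)%:C) = 'i * (sin p)%:C.
  by complex_ext; rewrite /tan; field.
have itan_conj : - ('i * (tan p)%:C)^* = 'i * (tan p)%:C by complex_ext; ring.
by rewrite norm_sec invrK; mx2_entrywise; rewrite ?itan_conj 1?mulrA ?itan_cos ?mulr1.
Qed.

End QSPMatrices.

Theorem lemma4p2 (R : realType) (psi : nat -> R)
  (hpsi : forall k : nat, - (pi / 2) < psi k < pi / 2)
  (d : nat) (hd : (1 <= d)%N)
  (x : R) (hx : 0 <= x <= 1)
  (theta : R) (htheta : 0 <= theta <= pi / 2) (hcos : cos theta = x) :
  let F : int -> R[i] :=
    fun n => if (absz n <= d)%N then 'i * (tan (psi (absz n)))%:C else 0 in
  let z : R[i] := expiC (2 * theta) in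
  'i * (complex.Im (u_qsp psi d x))%:C = nlfs F (- (d%:Z)) (2 * d).+1 z 0 1.
Proof.
move=> F z.
have sin_ge0 : 0 <= sin theta.
  apply: sin_ge0_pi; have := pi_gt0 R; case/andP: htheta => *; apply/andP; split; lra.
have -> : nlfs F (- d%:Z) (2 * d).+1 z =
          twist_prod (expiC theta) (fun k => (cos (psi k))%:C)
                     (fun k => 'i * (sin (psi k))%:C) d.
  apply: eq_bigr => j _; rewrite /z mulr_natl mulr2n expiCD; apply: nlf_factor_itan => //.
  by rewrite /F ifT //; have := ltn_ord j; lia.
by rewrite -hconj_Umat01 -hcos hconj_Umat // diagz_sandwich01 ?expiC_neq0.
Qed.
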